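(* The set $\mathbf{Sch}$ of all Schröder partitions, ordered by $\lambda\le\mu$ iff $\lambda_i\le\mu_i$ for all $i$, is a distributive lattice.
   Context: A Schröder partition is an integer partition in which every odd part has multiplicity at most $1$. In the order, parts beyond the length of a partition are taken to be $0$ (equivalently, $\lambda=(\lambda_1,\dots,\lambda_h)\le\mu=(\mu_1,\dots,\mu_k)$ iff $h\le k$ and $\lambda_i\le\mu_i$ for $i\le h$); this is containment of the corresponding shapes drawn with common top-left corner. *)

From mathcomp Require Export all_boot.
Set Implicit Arguments. Unset Strict Implicit. Unset Printing Implicit Defensive.

Definition is_partition (s : seq nat) : Prop :=
  sorted geq s /\ all (fun x => 0 < x) s.

Definition schroder (s : seq nat) : Prop :=
  is_partition s /\ forall k, odd k -> count_mem k s <= 1.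

Definition part_le (l m : seq nat) : Prop :=
  size l <= size m /\ forall i, i < size l -> nth 0 l i <= nth 0 m i.

From mathcomp Require Import zify.
Set Implicit Arguments. Unset Strict Implicit.

(* Containment of partitions is the pointwise order on their part sequences
   padded with zeros, so the componentwise minimum and maximum are the meet and
   join, and they satisfy the distributive law because nat is a chain.  What
   remains is that Schroeder partitions are closed under them.  In a partition,
   "every odd part occurs at most once" says that every odd entry is strictly
   larger than the next one (the padding zero included); this local condition
   survives componentwise min and max, where for max a tie between two odd
   entries is handled by using both strict decreases. *)

Lemma part_leP l m :
  part_le l m <-> size l <= size m /\ forall i, nth 0 l i <= nth 0 m i.
Proof.
rewrite /part_le; split=> -[size_lm le_lm]; split=> // i.
by case: (ltnP i (size l)) => [/le_lm | ge_i] //; rewrite nth_default.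
Qed.

Lemma part_le_refl l : part_le l l.
Proof. by split. Qed.

Lemma part_le_trans l m n : part_le l m -> part_le m n -> part_le l n.
Proof.
rewrite !part_leP => -[size_lm le_lm] [size_mn le_mn].
by split=> [|i]; [apply: leq_trans size_mn | apply: leq_trans (le_mn i)].
Qed.

Lemma part_le_anti l m : part_le l m -> part_le m l -> l = m.
Proof.
rewrite !part_leP => -[size_lm le_lm] [size_ml le_ml].
by apply: (@eq_from_nth _ 0) => [|i _]; apply/anti_leq/andP.
Qed.

Definition part_meet (l m : seq nat) : seq nat :=
  mkseq (fun i => minn (nth 0 l i) (nth 0 m i)) (minn (size l) (size m)).

Definition part_join (l m : seq nat) : seq nat :=
  mkseq (fun i => maxn (nth 0 l i) (nth 0 m i)) (maxn (size l) (size m)).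

Lemma size_part_meet l m : size (part_meet l m) = minn (size l) (size m).
Proof. exact: size_mkseq. Qed.

Lemma size_part_join l m : size (part_join l m) = maxn (size l) (size m).
Proof. exact: size_mkseq. Qed.

Lemma nth_part_meet l m i :
  nth 0 (part_meet l m) i = minn (nth 0 l i) (nth 0 m i).
Proof.
case: (ltnP i (minn (size l) (size m))) => [lt_i | ge_i].
  by rewrite nth_mkseq.
rewrite nth_default ?size_part_meet //.
by move: ge_i; rewrite geq_min => /orP[] /(nth_default 0)->; rewrite ?min0n ?minn0.
Qed.

Lemma nth_part_join l m i :
  nth 0 (part_join l m) i = maxn (nth 0 l i) (nth 0 m i).
Proof.
case: (ltnP i (maxn (size l) (size m))) => [lt_i | ge_i].
  by rewrite nth_mkseq.
rewrite nth_default ?size_part_join //.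
by move: ge_i; rewrite geq_max => /andP[/(nth_default 0)-> /(nth_default 0)->].
Qed.

Lemma part_leIl l m : part_le (part_meet l m) l.
Proof.
apply/part_leP; rewrite size_part_meet geq_minl; split=> // i.
by rewrite nth_part_meet geq_minl.
Qed.

Lemma part_leIr l m : part_le (part_meet l m) m.
Proof.
apply/part_leP; rewrite size_part_meet geq_minr; split=> // i.
by rewrite nth_part_meet geq_minr.
Qed.

Lemma part_lexI x l m : part_le x l -> part_le x m -> part_le x (part_meet l m).
Proof.
rewrite !part_leP size_part_meet => -[size_xl le_xl] [size_xm le_xm].
by split=> [|i]; rewrite ?nth_part_meet leq_min ?size_xl ?size_xm ?le_xl ?le_xm.
Qed.

Lemma part_leUl l m : part_le l (part_join l m).
Proof.
apply/part_leP; rewrite size_part_join leq_maxl; split=> // i.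
by rewrite nth_part_join leq_maxl.
Qed.

Lemma part_leUr l m : part_le m (part_join l m).
Proof.
apply/part_leP; rewrite size_part_join leq_maxr; split=> // i.
by rewrite nth_part_join leq_maxr.
Qed.

Lemma part_leUx l m x : part_le l x -> part_le m x -> part_le (part_join l m) x.
Proof.
rewrite !part_leP size_part_join => -[size_lx le_lx] [size_mx le_mx].
by split=> [|i]; rewrite ?nth_part_join geq_max ?size_lx ?size_mx ?le_lx ?le_mx.
Qed.

Lemma part_meetUr x y z :
  part_meet x (part_join y z) =
  part_join (part_meet x y) (part_meet x z).
Proof.
apply: (@eq_from_nth _ 0) => [|i _].
  by rewrite !(size_part_meet, size_part_join); lia.
by rewrite !(nth_part_meet, nth_part_join); lia.
Qed.

Lemma partition_nthP s :
  is_partition s <->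
  (forall i, nth 0 s i.+1 <= nth 0 s i) /\
  (forall i, i < size s -> 0 < nth 0 s i).
Proof.
split=> [[/(sortedP 0) sorted_s /(all_nthP 0) pos_s] | [mono_s pos_s]].
  split=> // i.
  by case: (ltnP i.+1 (size s)) => [/sorted_s | ge_i] //; rewrite nth_default.
by split; [apply/(sortedP 0) => i _; apply: mono_s | apply/(all_nthP 0)].
Qed.

Lemma nth_gt0_size s i : 0 < nth 0 s i -> i < size s.
Proof. by case: (ltnP i (size s)) => // ge_i; rewrite nth_default. Qed.

Lemma count_mem_gt1_adjacent s k i :
  i.+1 < size s -> nth 0 s i = k -> nth 0 s i.+1 = k -> 1 < count_mem k s.
Proof.
elim: s i => [|a t IH] [|i] //=.
  by case: t {IH} => [|b t] //= _ -> ->; rewrite eqxx.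
by move=> lt_i si_k si1_k; apply: leq_trans (IH i lt_i si_k si1_k) (leq_addl _ _).
Qed.

Lemma sorted_count_mem_le1 s k :
  sorted geq s ->
  (forall i, i < size s -> nth 0 s i = k -> nth 0 s i.+1 < k) ->
  count_mem k s <= 1.
Proof.
elim: s => //= a t IH sorted_at drop_k.
case: (eqVneq a k) => [ak | _] /=; last first.
  by rewrite add0n; apply: IH (path_sorted sorted_at) _ => i; apply: (drop_k i.+1).
suff /count_memPn-> : k \notin t by [].
move: (drop_k 0 isT ak) sorted_at; rewrite {}ak.
case: t {IH drop_k} => //= b t lt_bk /andP[_ path_bt].
have geq_trans : transitive geq by move=> x y z yx zy; apply: leq_trans zy yx.
rewrite in_cons negb_or neq_ltn lt_bk orbT /=.
by apply/negP => /(allP (order_path_min geq_trans path_bt)) /=; lia.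
Qed.

Lemma schroderP s :
  schroder s <->
  is_partition s /\ forall i, odd (nth 0 s i) -> nth 0 s i.+1 < nth 0 s i.
Proof.
rewrite /schroder; split=> -[part_s odd_s]; split=> //.
  move=> i odd_si; have [mono_s _] := (partition_nthP s).1 part_s.
  rewrite ltn_neqAle mono_s andbT; apply/eqP => eq_si.
  have lt_i : i.+1 < size s by apply: nth_gt0_size; rewrite eq_si odd_gt0.
  by have := odd_s _ odd_si; rewrite leqNgt (count_mem_gt1_adjacent lt_i erefl).
move=> k odd_k; apply: sorted_count_mem_le1 part_s.1 _ => i _ si_k.
by rewrite -si_k; apply: odd_s; rewrite si_k.
Qed.

Lemma schroder_meet l m : schroder l -> schroder m -> schroder (part_meet l m).
Proof.
rewrite !schroderP !partition_nthP.
move=> [[mono_l pos_l] odd_l] [[mono_m pos_m] odd_m].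
split; first split.
- by move=> i; rewrite !nth_part_meet; have := mono_l i; have := mono_m i; lia.
- move=> i; rewrite size_part_meet nth_part_meet !leq_min.
  by case/andP=> /pos_l-> /pos_m->.
- move=> i; rewrite !nth_part_meet.
  by case: (leqP (nth 0 l i) (nth 0 m i)) => [le_lm /odd_l | lt_ml /odd_m]; lia.
Qed.

Lemma schroder_join l m : schroder l -> schroder m -> schroder (part_join l m).
Proof.
rewrite !schroderP !partition_nthP.
move=> [[mono_l pos_l] odd_l] [[mono_m pos_m] odd_m].
split; first split.
- by move=> i; rewrite !nth_part_join; have := mono_l i; have := mono_m i; lia.
- move=> i; rewrite size_part_join nth_part_join !leq_max.
  by case/orP=> [/pos_l-> | /pos_m->]; rewrite ?orbT.
- move=> i; rewrite !nth_part_join; have le_l := mono_l i; have le_m := mono_m i.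
  case: (ltngtP (nth 0 l i) (nth 0 m i)) => [lt_lm /odd_m | lt_ml /odd_l | eq_lm odd_li]; try lia.
  have := odd_l _ odd_li; rewrite eq_lm in odd_li.
  by have := odd_m _ odd_li; lia.
Qed.

Theorem mainTheorem5 :
  (forall l, schroder l -> part_le l l) /\
  (forall l m, schroder l -> schroder m -> part_le l m -> part_le m l -> l = m) /\
  (forall l m n, schroder l -> schroder m -> schroder n ->
     part_le l m -> part_le m n -> part_le l n) /\
  exists meet join : seq nat -> seq nat -> seq nat,
    (forall l m, schroder l -> schroder m ->
       [/\ schroder (meet l m), part_le (meet l m) l, part_le (meet l m) m
         & forall x, schroder x -> part_le x l -> part_le x m ->
             part_le x (meet l m)]) /\
    (forall l m, schroder l -> schroder m ->
       [/\ schroder (join l m), part_le l (join l m), part_le m (join l m)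
         & forall x, schroder x -> part_le l x -> part_le m x ->
             part_le (join l m) x]) /\
    (forall x y z, schroder x -> schroder y -> schroder z ->
       meet x (join y z) = join (meet x y) (meet x z)).
Proof.
split; first by move=> l _; apply: part_le_refl.
split; first by move=> l m _ _; apply: part_le_anti.
split; first by move=> l m n _ _ _; apply: part_le_trans.
exists part_meet, part_join; split; [|split].
- move=> l m Sl Sm; split; [exact: schroder_meet | exact: part_leIl |
    exact: part_leIr | by move=> x _; apply: part_lexI].
- move=> l m Sl Sm; split; [exact: schroder_join | exact: part_leUl |
    exact: part_leUr | by move=> x _; apply: part_leUx].
- by move=> x y z _ _ _; apply: part_meetUr.
Qed.
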